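(* Let $P$ be a $d$-polytope. If its slack ideal $I_P$ is a pure difference binomial ideal, then $I_P\subseteq T_P$.
   Context: Let $P\subset\mathbb{R}^d$ be a $d$-dimensional polytope with labelled vertices $\mathbf p_1,\dots,\mathbf p_v$ and labelled facets $F_1,\dots,F_f$. The symbolic slack matrix $S_P(\mathbf x)$ is the $v\times f$ matrix with a $0$ in entry $(i,j)$ if $\mathbf p_i\in F_j$ and a distinct variable $x_{ij}$ otherwise; let $x_1,\dots,x_t$ denote all these variables. The slack ideal is $I_P=\langle (d+2)\text{-minors of } S_P(\mathbf x)\rangle : (x_1\cdots x_t)^\infty\subseteq\mathbb{C}[x_1,\dots,x_t]$. An ideal is a pure difference binomial ideal if it is generated by binomials $\mathbf x^{\mathbf a}-\mathbf x^{\mathbf b}$ with $\mathbf a,\mathbf b\in\mathbb{Z}^t_{\ge0}$. The non-incidence graph $G_P$ is the bipartite graph on the vertices and facets of $P$ with an edge $\{\mathbf p_i,F_j\}$ iff $\mathbf p_i\notin F_j$ (labelled by $x_{ij}$). $T_P$ is the toric ideal of the vertex-edge incidence matrix of $G_P$, i.e. the kernel of the map $x_{ij}\mapsto s_iu_j$ into $\mathbb{C}[s_1^{\pm1},\dots,s_v^{\pm1},u_1^{\pm1},\dots,u_f^{\pm1}]$. *)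

From HB Require Import structures.
From mathcomp Require Import all_boot all_order all_algebra.
From mathcomp Require Import mpoly.
From mathcomp Require Import complex.
Set Implicit Arguments. Unset Strict Implicit. Unset Printing Implicit Defensive.
Import Order.TTheory GRing.Theory Num.Theory.
Local Open Scope ring_scope.

Section Ideals.
Variables (K : fieldType) (n : nat).

Definition ideal_gen (S : {mpoly K[n]} -> Prop) : {mpoly K[n]} -> Prop :=
  fun p => exists r : seq ({mpoly K[n]} * {mpoly K[n]}),
    (forall q, q \in r -> S q.2) /\ p = \sum_(q <- r) q.1 * q.2.

Definition saturation (I : {mpoly K[n]} -> Prop) (g : {mpoly K[n]}) :
  {mpoly K[n]} -> Prop := fun p => exists k : nat, I (g ^+ k * p).

Definition pure_difference_binomial (I : {mpoly K[n]} -> Prop) : Prop :=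
  exists G : 'X_{1..n} * 'X_{1..n} -> Prop,
    forall p, I p <->
      ideal_gen (fun q => exists ab, G ab /\ q = 'X_[ab.1] - 'X_[ab.2]) p.

Definition minors (k m1 m2 : nat) (M : 'M[{mpoly K[n]}]_(m1, m2)) :
  {mpoly K[n]} -> Prop :=
  fun q => exists (r : 'I_k -> 'I_m1) (c : 'I_k -> 'I_m2),
    {homo r : a b / (a < b)%N >-> (a < b)%N} /\
    {homo c : a b / (a < b)%N >-> (a < b)%N} /\
    q = \det (\matrix_(a, b) M (r a) (c b)).

End Ideals.

(* d-polytopes given by their labelled vertices (rows of V) and        *)
(* labelled facets (given by the sets of vertex labels they contain).  *)
Section Polytope.
Variables (R : realFieldType) (d v : nat).
Implicit Type V : 'M[R]_(v, d).

Definition lift_pts V : 'M[R]_(v, 1 + d) := row_mx (const_mx 1) V.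

(* rows of the homogenized matrix indexed by S; its rank is 1 + affine
   dimension of conv {p_i | i in S} *)
Definition rows_in V (S : {set 'I_v}) : 'M[R]_(v, 1 + d) :=
  \matrix_(i < v) (if i \in S then row i (lift_pts V) else 0).

(* the rows of V are exactly the vertices of the d-dimensional polytope
   P = conv(rows of V) in R^d: P is full-dimensional, and each p_i is a
   vertex, i.e. a 0-dimensional face (the unique maximizer of some linear
   functional over the p_j). *)
Definition is_dpolytope_vertices V : Prop :=
  \rank (lift_pts V) = d.+1 /\
  forall i : 'I_v, exists c : 'cV[R]_d,
    forall j : 'I_v, j != i -> (V *m c) j 0 < (V *m c) i 0.

(* S is the vertex set of a facet of P = conv(rows of V): the set of
   vertices on which a valid inequality a.x <= b is tight, of affine
   dimension d - 1. *)
Definition is_facet_set V (S : {set 'I_v}) : Prop :=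
  (exists (a : 'cV[R]_d) (b : R),
      (forall i, (V *m a) i 0 <= b) /\ S = [set i | (V *m a) i 0 == b]) /\
  \rank (rows_in V S) = d.

Definition facet_labelling (f : nat) V (F : 'I_f -> {set 'I_v}) : Prop :=
  injective F /\ forall S, is_facet_set V S <-> exists j, F j = S.

End Polytope.

Section Slack.
Variables (K : fieldType) (v f : nat) (F : 'I_f -> {set 'I_v}).

(* non-incident pairs (p_i not in F_j): they index the variables x_ij *)
Definition nonincid : {set 'I_v * 'I_f} := [set ij | ij.1 \notin F ij.2].

Definition nvars : nat := #|nonincid|.

Definition var_pair (k : 'I_nvars) : 'I_v * 'I_f := enum_val k.

(* symbolic slack matrix: 0 if p_i in F_j, the variable x_ij otherwise *)
Definition symb_slack : 'M[{mpoly K[nvars]}]_(v, f) :=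
  \matrix_(i, j)
    match [pick k : 'I_nvars | var_pair k == (i, j)] with
    | Some k => 'X_k
    | None => 0
    end.

Definition slack_ideal (d : nat) : {mpoly K[nvars]} -> Prop :=
  saturation (ideal_gen (minors (d.+2) symb_slack))
             (\prod_(k < nvars) 'X_k).

(* image of x_ij : s_i u_j, variables s_1..s_v,u_1..u_f *)
Definition toric_images : nvars.-tuple {mpoly K[v + f]} :=
  [tuple 'X_(lshift f (var_pair k).1) * 'X_(rshift v (var_pair k).2)
   | k < nvars].

Definition toric_ideal : {mpoly K[nvars]} -> Prop :=
  fun p => p \mPo toric_images = 0.

End Slack.

From HB Require Import structures.
From mathcomp Require Import all_boot all_order all_algebra.
From mathcomp Require Import mpoly.
From mathcomp Require Import complex.
Set Implicit Arguments. Unset Strict Implicit. Unset Printing Implicit Defensive.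
Import Order.TTheory GRing.Theory Num.Theory.
Local Open Scope ring_scope.

(* Write the slack matrix of P as S = (1 | V) W, so that it has rank at most
   d + 1 and S_ij = 0 exactly when p_i lies on F_j.  The map
   x_ij |-> S_ij s_i u_j then kills every (d+2)-minor of the symbolic slack
   matrix, and since it sends x_1 ... x_t to a nonzero term it kills the
   whole slack ideal.  A binomial x^a - x^b killed by this map is killed by
   x_ij |-> s_i u_j as well: both sides are nonzero multiples of monomials in
   the s_i, u_j, which must therefore agree.  As I_P is generated by such
   binomials, I_P lies in T_P. *)

Lemma minor_mulmx_eq0 (R : comPzRingType) m n k
    (B : 'M[R]_(m, k)) (C : 'M[R]_(k, n))
    (r : 'I_k.+1 -> 'I_m) (c : 'I_k.+1 -> 'I_n) :
  \det (\matrix_(a, b) (B *m C) (r a) (c b)) = 0.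
Proof.
rewrite -[\matrix_(_, _) _]/(mxsub r c _) mxsub_mul.
set B' := rowsub r B; set C' := colsub c C.
have -> : B' *m C' = row_mx (0 : 'M_(k.+1, 1)) B' *m col_mx (0 : 'M_(1, k.+1)) C'.
  by rewrite mul_row_col mul0mx add0r.
rewrite det_mulmx (expand_det_col _ (lshift k (ord0 : 'I_1))) big1 ?mul0r // => a _.
by rewrite row_mxEl mxE mul0r.
Qed.

Section IdealKernels.
Variables (K : fieldType) (n : nat).
Implicit Types (I S : {mpoly K[n]} -> Prop) (g p : {mpoly K[n]}).

Lemma ideal_gen_kernel (A : pzRingType) (h : {rmorphism {mpoly K[n]} -> A}) S :
  (forall q, S q -> h q = 0) -> forall p, ideal_gen S p -> h p = 0.
Proof.
move=> hS p [r [Sr ->]]; rewrite rmorph_sum big_seq big1 // => q /Sr /hS hq.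
by rewrite rmorphM hq mulr0.
Qed.

Lemma saturation_kernel (A : idomainType) (h : {rmorphism {mpoly K[n]} -> A}) I g :
  (forall q, I q -> h q = 0) -> h g != 0 -> forall p, saturation I g p -> h p = 0.
Proof.
move=> hI hg p [k /hI]; rewrite rmorphM rmorphXn => /eqP.
by rewrite mulf_eq0 expf_eq0 (negbTE hg) andbF => /eqP.
Qed.

Lemma pure_difference_binomial_kernel (A : pzRingType)
    (h : {rmorphism {mpoly K[n]} -> A}) I :
  pure_difference_binomial I ->
  (forall a b, I ('X_[a] - 'X_[b]) -> h ('X_[a] - 'X_[b]) = 0) ->
  forall p, I p -> h p = 0.
Proof.
move=> [G HG] hbin p /HG; apply: ideal_gen_kernel => _ [ab [Gab ->]].
apply/hbin/HG; exists [:: (1, 'X_[ab.1] - 'X_[ab.2])]; split.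
  by move=> q; rewrite inE => /eqP -> /=; exists ab.
by rewrite big_seq1 mul1r.
Qed.

End IdealKernels.

Section MonomialMaps.
Variables (K : idomainType) (n m : nat) (e : 'I_n -> 'X_{1..m}).

Definition mexp (a : 'X_{1..n}) : 'X_{1..m} := (\sum_(k < n) e k *+ a k)%MM.

Definition monomial_map : n.-tuple {mpoly K[m]} := [tuple 'X_[e k] | k < n].

Definition scaled_monomial_map (c : 'I_n -> K) : n.-tuple {mpoly K[m]} :=
  [tuple c k *: 'X_[e k] | k < n].

Lemma comp_monomial_mapX a : 'X_[a] \mPo monomial_map = 'X_[mexp a].
Proof.
by rewrite comp_mpolyX -mprodXnE; apply: eq_bigr => k _; rewrite tnth_mktuple.
Qed.

Lemma comp_scaled_monomial_mapX c a :
  'X_[a] \mPo scaled_monomial_map c = (\prod_(k < n) c k ^+ a k) *: 'X_[mexp a].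
Proof.
rewrite comp_mpolyX -mprodXnE -mul_mpolyC rmorph_prod -big_split /=.
by apply: eq_bigr => k _; rewrite tnth_mktuple -mul_mpolyC exprMn rmorphXn.
Qed.

Variables (c : 'I_n -> K) (c_neq0 : forall k, c k != 0).

Let weight_neq0 a : \prod_(k < n) c k ^+ a k != 0.
Proof. by apply/prodf_neq0 => k _; rewrite expf_neq0. Qed.

Lemma comp_scaled_monomial_mapX_neq0 a : 'X_[a] \mPo scaled_monomial_map c != 0.
Proof.
rewrite comp_scaled_monomial_mapX; apply/eqP => /(congr1 (mcoeff (mexp a))).
by rewrite mcoeffZ mcoeffX eqxx mulr1 mcoeff0; apply/eqP.
Qed.

Lemma scaled_monomial_map_binomial a b :
  ('X_[a] - 'X_[b]) \mPo scaled_monomial_map c = 0 ->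
  ('X_[a] - 'X_[b]) \mPo monomial_map = 0.
Proof.
rewrite !raddfB /= !comp_scaled_monomial_mapX !comp_monomial_mapX.
move=> /eqP; rewrite subr_eq0 => /eqP /(congr1 (mcoeff (mexp a))).
rewrite !mcoeffZ !mcoeffX eqxx mulr1; case: eqP => [<- _|_]; first by rewrite subrr.
by rewrite mulr0 => /eqP; rewrite (negbTE (weight_neq0 a)).
Qed.

End MonomialMaps.

Section SlackRealization.
Variables (K : fieldType) (d v f : nat) (F : 'I_f -> {set 'I_v}).

Definition toric_exponent (k : 'I_(nvars F)) : 'X_{1..v + f} :=
  (U_(lshift f (var_pair k).1) + U_(rshift v (var_pair k).2))%MM.

Lemma toric_imagesE : toric_images K F = monomial_map K toric_exponent.
Proof. by apply: eq_from_tnth => k; rewrite !tnth_mktuple mpolyXD. Qed.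

Variables (L : 'M[K]_(v, 1 + d)) (W : 'M[K]_(1 + d, f)).
Hypothesis slack_eq0 : forall i j, ((L *m W) i j == 0) = (i \in F j).

Definition slack_weight (k : 'I_(nvars F)) : K :=
  (L *m W) (var_pair k).1 (var_pair k).2.

Let phi := scaled_monomial_map toric_exponent slack_weight.

Lemma slack_weight_neq0 k : slack_weight k != 0.
Proof. by have := enum_valP k; rewrite inE /slack_weight slack_eq0. Qed.

Lemma comp_symb_slack i j :
  symb_slack K F i j \mPo phi = (L *m W) i j *: ('X_(lshift f i) * 'X_(rshift v j)).
Proof.
rewrite mxE; case: pickP => [k /eqP ij_k | no_var].
  by rewrite comp_mpolyXU -tnth_nth !tnth_mktuple mpolyXD /slack_weight ij_k.
have /eqP -> : (L *m W) i j == 0.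
  rewrite slack_eq0; apply: contraT => Fij.
  have ij_nonincid : (i, j) \in nonincid F by rewrite inE.
  have := no_var (enum_rank_in ij_nonincid (i, j)).
  by rewrite /var_pair enum_rankK_in // eqxx.
by rewrite comp_mpoly0 scale0r.
Qed.

Lemma comp_minors_eq0 q : minors d.+2 (symb_slack K F) q -> q \mPo phi = 0.
Proof.
case=> r [c [_ [_ ->]]]; rewrite -det_map_mx.
pose B := \matrix_(i, t) (L i t *: 'X_(lshift f i) : {mpoly K[v + f]}).
pose C := \matrix_(t, j) (W t j *: 'X_(rshift v j) : {mpoly K[v + f]}).
have -> : map_mx (comp_mpoly phi) (\matrix_(a, b) symb_slack K F (r a) (c b))
        = \matrix_(a, b) (B *m C) (r a) (c b).
  apply/matrixP => a b; rewrite [LHS]mxE [in LHS]mxE comp_symb_slack !mxE scaler_suml.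
  by apply: eq_bigr => t _; rewrite !mxE -scalerAl -scalerAr scalerA.
exact: minor_mulmx_eq0.
Qed.

Lemma slack_ideal_kernel p : @slack_ideal K v f F d p -> p \mPo phi = 0.
Proof.
apply: (saturation_kernel (h := comp_mpoly phi) (ideal_gen_kernel comp_minors_eq0)).
by rewrite mprodXE comp_scaled_monomial_mapX_neq0 // => k; exact: slack_weight_neq0.
Qed.

Lemma slack_ideal_sub_toric :
  pure_difference_binomial (@slack_ideal K v f F d) ->
  forall p, @slack_ideal K v f F d p -> @toric_ideal K v f F p.
Proof.
move=> binomial_ideal.
apply: (pure_difference_binomial_kernel (h := comp_mpoly (toric_images K F))
          binomial_ideal).
move=> a b /slack_ideal_kernel; rewrite toric_imagesE.
by apply: scaled_monomial_map_binomial => k; exact: slack_weight_neq0.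
Qed.

End SlackRealization.

Lemma slack_matrix_factorization (R : realFieldType) d v f
    (V : 'M[R]_(v, d)) (F : 'I_f -> {set 'I_v}) :
  facet_labelling V F ->
  exists W : 'M[R]_(1 + d, f),
    forall i j, ((lift_pts V *m W) i j == 0) = (i \in F j).
Proof.
move=> [_ facetF].
have /fin_all_exists [ab tightF] : forall j, exists ab : 'cV[R]_d * R,
    F j = [set i | (V *m ab.1) i 0 == ab.2].
  move=> j; have [[a [b [_ ->]]] _] := proj2 (facetF (F j)) (ex_intro _ j erefl).
  by exists (a, b).
exists (col_mx (\row_j (ab j).2) (- \matrix_(t, j) (ab j).1 t 0)) => i j.
rewrite /lift_pts mul_row_col mulmxN !mxE big_ord1 !mxE mul1r.
rewrite tightF inE subr_eq0 eq_sym [in RHS]mxE.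
by congr (_ == _); apply: eq_bigr => t _; rewrite mxE.
Qed.

Theorem corollary3p5 (R : rcfType) (d v f : nat)
    (V : 'M[R]_(v, d)) (F : 'I_f -> {set 'I_v}) :
  is_dpolytope_vertices V ->
  facet_labelling V F ->
  pure_difference_binomial (@slack_ideal R[i] v f F d) ->
  forall p, @slack_ideal R[i] v f F d p -> @toric_ideal R[i] v f F p.
Proof.
(* The rank bound d + 1 comes from the factorization through (1 | V) alone, so
   the vertex description of P is not needed. *)
move=> _ /slack_matrix_factorization [W slackW].
apply: (slack_ideal_sub_toric (L := map_mx (real_complex R) (lift_pts V))
                              (W := map_mx (real_complex R) W)) => i j.
by rewrite -map_mxM mxE fmorph_eq0 slackW.
Qed.
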